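(* Let $q>2$ be a prime power, $h\geq 2$, and let $\mathcal{L}_1,\mathcal{L}_2,\mathcal{L}_3$ be pairwise disjoint blocking sets of $\mathrm{PG}(2,q^h)$, each projectively equivalent to $\{(x:\mathrm{Tr}_{q^h/q}(x):y): x\in\mathbb{F}_{q^h},\ y\in\mathbb{F}_q,\ (x,y)\neq(0,0)\}$. Then $\mathcal{L}_1\cup\mathcal{L}_2\cup\mathcal{L}_3$ is a minimal $3$-fold blocking set.
   Context: $\mathrm{Tr}_{q^h/q}(x)=x+x^q+\dots+x^{q^{h-1}}$. A $t$-fold blocking set is a point set meeting every line in at least $t$ points; it is minimal if it contains no smaller $t$-fold blocking set (equivalently, each of its points lies on a line meeting it in exactly $t$ points). *)

From HB Require Import structures.
From mathcomp Require Import all_boot all_order all_algebra.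
Set Implicit Arguments. Unset Strict Implicit. Unset Printing Implicit Defensive.
Import GRing.Theory.
Local Open Scope ring_scope.

(* Projective plane PG(2,K) over a finite field K.  A point (and, dually, a
   line) is represented by its unique normalized homogeneous coordinate
   vector: the first nonzero coordinate equals 1. *)
Definition normalized (K : finFieldType) (v : 'rV[K]_3) : bool :=
  [|| v 0 0 == 1,
      (v 0 0 == 0) && (v 0 1 == 1) |
      [&& v 0 0 == 0, v 0 1 == 0 & v 0 2 == 1]].

Definition point (K : finFieldType) := {v : 'rV[K]_3 | normalized v}.
Definition line (K : finFieldType) := {v : 'rV[K]_3 | normalized v}.

Definition incident (K : finFieldType) (p : point K) (l : line K) : bool :=
  \sum_(i < 3) (val p) 0 i * (val l) 0 i == 0.

Definition meet_card (K : finFieldType) (S : {set point K}) (l : line K) : nat :=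
  #|[set p in S | incident p l]|.

Definition tfold_blocking (K : finFieldType) (t : nat) (S : {set point K}) : Prop :=
  forall l : line K, (t <= meet_card S l)%N.

Definition blocking_set (K : finFieldType) (S : {set point K}) : Prop :=
  tfold_blocking 1 S.

Definition minimal_tfold_blocking (K : finFieldType) (t : nat) (S : {set point K}) : Prop :=
  tfold_blocking t S /\
  forall S' : {set point K}, S' \proper S -> ~ tfold_blocking t S'.

Definition prime_power (q : nat) : Prop :=
  exists p k : nat, prime p /\ (0 < k)%N /\ q = (p ^ k)%N.

Definition trace (K : finFieldType) (q h : nat) (x : K) : K :=
  \sum_(i < h) x ^+ (q ^ i).

Definition represents (K : finFieldType) (p : point K) (w : 'rV[K]_3) : bool :=
  [exists c : K, (c != 0) && (val p == c *: w)].

(* The standard set {(x : Tr(x) : y) | x in F_{q^h}, y in F_q, (x,y) != (0,0)};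
   F_q is the subfield {y | y^q = y} of K (where #|K| = q^h). *)
Definition std_set (K : finFieldType) (q h : nat) : {set point K} :=
  [set p : point K | [exists x : K, exists y : K,
      [&& y ^+ q == y, (x, y) != (0, 0) &
          represents p (\row_(j < 3) [:: x; trace q h x; y]`_j)]]].

Definition proj_equiv_std (K : finFieldType) (q h : nat) (S : {set point K}) : Prop :=
  exists A : 'M[K]_3, A \in unitmx /\
    forall p : point K,
      p \in S <-> exists2 s : point K, s \in @std_set K q h & represents p (val s *m A).

(* Write F_q for the set of fixed points of x |-> x^q in K, so #|F_q| >= q. Each L_i is an
   F_q-linear set: the set of points represented by the nonzero vectors of a set W_i of at
   most q^h * q vectors closed under addition and F_q-scaling. Hence a line meeting L_i in
   two points meets it in more than q points, and (q - 1) #|L_i| <= q^(h+1). Since the L_i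
   are disjoint blocking sets, their union is 3-fold blocking, and it is minimal as soon as
   every point P, say of L_1, lies on a line meeting each L_i exactly once. Otherwise each
   of the at least q^h + 1 lines through P contains at least q + 2 points of the disjoint
   union of L_1 \ {P}, L_2 and L_3, and counting these points gives
   (q - 1)(q^h + 1)(q + 2) <= 3 q^(h+1), which is false for q > 2. *)

From mathcomp Require Import all_boot all_algebra finfield fingroup cyclic.
From mathcomp Require Import zify ring.
Set Implicit Arguments. Unset Strict Implicit. Unset Printing Implicit Defensive.
Import GRing.Theory FinRing.Theory.
Local Open Scope ring_scope.

Section ProjectivePlane.

Variable K : finFieldType.
Implicit Types (u v w e : 'rV[K]_3) (p P Q : point K) (l : line K) (S : {set point K}).

Definition dot u v : K := \sum_(i < 3) u 0 i * v 0 i.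

Definition row3 (a b c : K) : 'rV[K]_3 := \row_(j < 3) [:: a; b; c]`_j.

Lemma dotE u v : dot u v = u 0 0 * v 0 0 + u 0 1 * v 0 1 + u 0 2 * v 0 2.
Proof.
rewrite /dot !big_ord_recr big_ord0 /= add0r.
by congr (u 0 _ * v 0 _ + u 0 _ * v 0 _ + u 0 _ * v 0 _); apply: val_inj.
Qed.

Lemma eq_row3 u v : u 0 0 = v 0 0 -> u 0 1 = v 0 1 -> u 0 2 = v 0 2 -> u = v.
Proof.
move=> e0 e1 e2; apply/rowP => -[[|[|[|//]]] i3];
  [rewrite (_ : Ordinal i3 = 0) | rewrite (_ : Ordinal i3 = 1) | rewrite (_ : Ordinal i3 = 2)];
  by [|apply: val_inj].
Qed.

Lemma dotC u v : dot u v = dot v u.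
Proof. by rewrite !dotE; ring. Qed.

Lemma dotDl u v w : dot (u + v) w = dot u w + dot v w.
Proof. by rewrite !dotE !mxE; ring. Qed.

Lemma dotDr u v w : dot u (v + w) = dot u v + dot u w.
Proof. by rewrite dotC dotDl !(dotC u). Qed.

Lemma dotZr a u v : dot u (a *: v) = a * dot u v.
Proof. by rewrite !dotE !mxE; ring. Qed.

Lemma dotZl a u v : dot (a *: u) v = a * dot u v.
Proof. by rewrite dotC dotZr dotC. Qed.

Lemma normalized_neq0 u : normalized u -> u != 0.
Proof.
apply: contraTneq => ->; rewrite /normalized !mxE eqxx /=.
by rewrite eq_sym oner_eq0.
Qed.

Lemma normalized_scale_eq u v c : normalized u -> normalized v -> u = c *: v -> u = v.
Proof.
move=> nu nv uv; suff c1 : c = 1 by rewrite uv c1 scale1r.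
have c0 : c != 0 by apply: contraNneq (normalized_neq0 nu) => c0; rewrite uv c0 scale0r.
move: nu; rewrite uv /normalized !mxE.
by case/or3P: nv => [/eqP->|/andP[/eqP-> /eqP->]|/and3P[/eqP-> /eqP-> /eqP->]];
  rewrite ?mulr0 ?mulr1 ?eqxx ?(eq_sym 0 1) ?oner_eq0 ?(negbTE c0) ?orbF => /eqP.
Qed.

Lemma representsP p w : reflect (exists2 c, c != 0 & val p = c *: w) (represents p w).
Proof.
apply: (iffP existsP) => [[c /andP[c0 /eqP pw]]|[c c0 pw]]; exists c => //.
by rewrite c0 pw eqxx.
Qed.

Lemma represents_val p : represents p (val p).
Proof. by apply/representsP; exists 1; rewrite ?oner_eq0 ?scale1r. Qed.

Lemma represents_neq0 p w : represents p w -> w != 0.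
Proof.
case/representsP=> c _ pw; apply: contraTneq (normalized_neq0 (valP p)) => w0.
by rewrite pw w0 scaler0 eqxx.
Qed.

Lemma representsZ p w a : a != 0 -> represents p (a *: w) = represents p w.
Proof.
move=> a0; apply/representsP/representsP => -[c c0 pw].
  by exists (c * a); rewrite ?mulf_neq0 // pw scalerA.
by exists (c / a); rewrite ?mulf_neq0 ?invr_eq0 // pw scalerA mulfVK.
Qed.

Lemma represents_inj p p' w : represents p w -> represents p' w -> p = p'.
Proof.
case/representsP=> c c0 pw /representsP[c' c0' pw']; apply: val_inj.
apply: (normalized_scale_eq (c := c / c')) (valP p) (valP p') _.
by rewrite pw pw' scalerA mulfVK.
Qed.

Lemma represents_exists w : w != 0 -> exists p, represents p w.
Proof.
move=> w0.
have [a a0 na] : exists2 a : K, a != 0 & normalized (a *: w).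
  have [e0|e0] := eqVneq (w 0 0) 0; last first.
    by exists (w 0 0)^-1; rewrite /normalized ?mxE ?mulVf ?eqxx ?invr_eq0.
  have [e1|e1] := eqVneq (w 0 1) 0; last first.
    by exists (w 0 1)^-1; rewrite /normalized ?mxE ?mulVf ?e0 ?mulr0 ?eqxx ?orbT ?invr_eq0.
  have [e2|e2] := eqVneq (w 0 2) 0; first by rewrite (@eq_row3 w 0) ?mxE // eqxx in w0.
  by exists (w 0 2)^-1; rewrite /normalized ?mxE ?mulVf ?e0 ?e1 ?mulr0 ?eqxx ?orbT ?invr_eq0.
exists (exist (fun v => normalized v) _ na : point K); apply/representsP.
by exists a.
Qed.

Lemma incidentE p l : incident p l = (dot (val p) (val l) == 0).
Proof. by []. Qed.

Lemma incident_represents p w l : represents p w -> incident p l = (dot w (val l) == 0).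
Proof.
case/representsP=> c c0 pw.
by rewrite incidentE pw dotZl mulf_eq0 (negbTE c0).
Qed.

Lemma exists_dot1 u : u != 0 -> exists e, dot e u = 1.
Proof.
move=> u0; have [i ui] : exists i, u 0 i != 0.
  apply/existsP; apply: contraNT u0 => /existsPn ui.
  by apply/eqP/rowP => i; rewrite mxE; apply/eqP/negbNE.
exists ((u 0 i)^-1 *: delta_mx 0 i); rewrite dotZl -[RHS](mulVf ui); congr (_ * _).
rewrite /dot (bigD1 i) //= big1 => [|j ji]; rewrite !mxE ?eqxx ?mul1r ?addr0 //.
by rewrite (negbTE ji) andbF mul0r.
Qed.

Definition cross u v : 'rV[K]_3 :=
  row3 (u 0 1 * v 0 2 - u 0 2 * v 0 1) (u 0 2 * v 0 0 - u 0 0 * v 0 2)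
       (u 0 0 * v 0 1 - u 0 1 * v 0 0).

Lemma dot_crossl u v : dot u (cross u v) = 0.
Proof. by rewrite dotE !mxE /=; ring. Qed.

Lemma dot_crossr u v : dot v (cross u v) = 0.
Proof. by rewrite dotE !mxE /=; ring. Qed.

Lemma cross_cross e u v : cross e (cross u v) = dot e v *: u - dot e u *: v.
Proof. by apply: eq_row3; rewrite !dotE !mxE /=; ring. Qed.

Lemma cross_eq0P u v : u != 0 -> reflect (exists k, v = k *: u) (cross u v == 0).
Proof.
move=> u0; apply: (iffP eqP) => [uv0|[k ->]].
  have [e eu] := exists_dot1 u0; exists (dot e v).
  have : cross e (cross u v) = 0 by rewrite uv0; apply: eq_row3; rewrite !mxE /=; ring.
  by rewrite cross_cross eu scale1r => /eqP; rewrite subr_eq0 => /eqP.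
by apply: eq_row3; rewrite !mxE /=; ring.
Qed.

Lemma cross_eq0_represents p p' u v :
  represents p u -> represents p' v -> (cross u v == 0) = (p == p').
Proof.
move=> pu p'v; apply/(cross_eq0P _ (represents_neq0 pu))/eqP => [[k vk]|pp'].
  have k0 : k != 0 by apply: contraNneq (represents_neq0 p'v) => k0; rewrite vk k0 scale0r.
  by apply: represents_inj pu _; rewrite -(representsZ _ _ k0) -vk.
case/representsP: pu => c c0 pu; case/representsP: p'v => c' c0' p'v.
exists (c / c'); apply: (scalerI c0').
by rewrite -p'v -pp' pu scalerA mulrCA mulfV ?mulr1.
Qed.

Lemma incident2_represents P Q l : P != Q ->
  incident P l && incident Q l = represents l (cross (val P) (val Q)).
Proof.
move=> PQ; have PQ0 : cross (val P) (val Q) != 0.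
  by rewrite (cross_eq0_represents (represents_val P) (represents_val Q)).
rewrite !incidentE; apply/idP/idP => [/andP[/eqP Pl /eqP Ql]|/representsP[c c0 lc]].
  have /(cross_eq0P _ (normalized_neq0 (valP l)))[k PQk] :
      cross (val l) (cross (val P) (val Q)) == 0.
    by rewrite cross_cross !(dotC (val l)) Pl Ql !scale0r subr0.
  have k0 : k != 0 by apply: contraNneq PQ0 => k0; rewrite PQk k0 scale0r.
  by rewrite PQk representsZ ?represents_val.
by rewrite lc !dotZr dot_crossl dot_crossr mulr0 eqxx.
Qed.

Lemma card_lines_through2 P Q : P != Q ->
  #|[set l : line K | incident P l && incident Q l]| = 1%N.
Proof.
move=> PQ; have PQ0 : cross (val P) (val Q) != 0.
  by rewrite (cross_eq0_represents (represents_val P) (represents_val Q)).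
have [l0 l0PQ] := represents_exists PQ0.
rewrite (_ : [set l | _] = [set l0]) ?cards1 //; apply/setP => l.
rewrite !inE incident2_represents //.
by apply/idP/eqP => [lPQ|->] //; exact: represents_inj lPQ l0PQ.
Qed.

Lemma sum_meet_card_lines_through P S : P \notin S ->
  (\sum_(l in [set l : line K | incident P l]) meet_card S l = #|S|)%N.
Proof.
move=> PS; have meetE l : meet_card S l = (\sum_(Q in S | incident Q l) 1)%N.
  by rewrite /meet_card -sum1_card; apply: eq_bigl => Q; rewrite inE.
rewrite (eq_bigr _ (fun l _ => meetE l)) (exchange_big_dep (mem S)) => [|? ? _ /andP[] //].
rewrite -[RHS]sum1_card; apply: eq_bigr => Q QS.
have PQ : P != Q by apply: contraNneq PS => ->.
rewrite -[RHS](card_lines_through2 PQ) -sum1_card.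
by apply: eq_bigl => l; rewrite !inE (QS : Q \in S).
Qed.

Definition secants_gt s S := forall l, (1 < meet_card S l -> s < meet_card S l)%N.

Definition linear_set (W : {set 'rV[K]_3}) : {set point K} :=
  [set p | [exists w in W, represents p w]].

Lemma card_linear_set_ge W : (#|W :\ 0%R| <= (#|K| - 1) * #|linear_set W|)%N.
Proof.
pose g (pc : point K * K) := pc.2 *: val pc.1.
have /subset_leq_card : W :\ 0 \subset g @: setX (linear_set W) [set~ 0].
  apply/subsetP => w; rewrite !inE => /andP[w0 wW].
  have [p /[dup] pw /representsP[c c0 pc]] := represents_exists w0.
  apply/imsetP; exists (p, c^-1); last by rewrite /g /= pc scalerA mulVf ?scale1r.
  by rewrite !inE invr_eq0 c0 andbT; apply/existsP; exists w; rewrite wW.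
move/leq_trans; apply; apply: leq_trans (leq_imset_card _ _) _.
by rewrite cardsX cardsC1 mulnC subn1.
Qed.

Section LinearSet.

Variables (F : {set K}) (W : {set 'rV[K]_3}).
Hypothesis scale_closed : forall a w, a \in F -> w \in W -> a *: w \in W.

Lemma card_linear_set_le : ((#|F| - 1) * #|linear_set W| <= #|W :\ 0%R|)%N.
Proof.
have /fin_all_exists[wp wpP] : forall p : point K,
    exists w, p \in linear_set W -> w \in W /\ represents p w.
  move=> p; case: (boolP (p \in linear_set W)).
    by rewrite inE => /existsP[w /andP[wW pw]]; exists w.
  by exists 0.
pose g (pa : point K * K) := pa.2 *: wp pa.1.
have ginj : {in setX (linear_set W) (F :\ 0) &, injective g}.
  move=> [p a] [p' a'] /setXP[/= /wpP[_ pw] aF] /setXP[/= /wpP[_ p'w] a'F] /= E.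
  rewrite !inE in aF a'F; case/andP: aF => a0 _; case/andP: a'F => a'0 _.
  have pp' : p = p'.
    apply: (@represents_inj _ _ (g (p, a))); first by rewrite representsZ.
    by rewrite E representsZ.
  rewrite -pp' /g /= in E *; congr (_, _); apply/eqP; rewrite -subr_eq0.
  have : (a - a') *: wp p == 0 by rewrite scalerBl E subrr.
  by rewrite scaler_eq0 (negbTE (represents_neq0 pw)) orbF.
have /subset_leq_card : g @: setX (linear_set W) (F :\ 0) \subset W :\ 0.
  apply/subsetP => _ /imsetP[[p a] /setXP[/= /wpP[wW pw] aF] ->].
  rewrite !inE in aF; case/andP: aF => a0 aF.
  by rewrite !inE scaler_eq0 negb_or a0 (represents_neq0 pw) scale_closed.
apply: leq_trans; rewrite (card_in_imset ginj) cardsX mulnC leq_mul //.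
by rewrite leq_subLR (cardsD1 0 F) leq_add2r leq_b1.
Qed.

Hypothesis add_closed : forall u v, u \in W -> v \in W -> u + v \in W.

Lemma secants_gt_linear_set : secants_gt #|F| (linear_set W).
Proof.
move=> l /card_gt1P[p1 [p2 [+ + p12]]]; rewrite !inE.
move=> /andP[/existsP[w1 /andP[w1W pw1]] p1l] /andP[/existsP[w2 /andP[w2W pw2]] p2l].
have c12 : cross w1 w2 != 0 by rewrite (cross_eq0_represents pw1 pw2).
have cross_comb a b : cross (w1 + a *: w2) (w1 + b *: w2) = (b - a) *: cross w1 w2.
  by apply: eq_row3; rewrite !mxE /=; ring.
have cross_combr a : cross (w1 + a *: w2) w2 = cross w1 w2.
  by apply: eq_row3; rewrite !mxE /=; ring.
have /fin_all_exists[f pf] : forall a, exists p, represents p (w1 + a *: w2).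
  move=> a; apply: represents_exists.
  apply: contraNneq c12 => w0; rewrite -(cross_combr a) w0.
  by apply/eqP/eq_row3; rewrite !mxE /=; ring.
have finj : {in F &, injective f}.
  move=> a b _ _ fab; apply/eqP; rewrite eq_sym -subr_eq0.
  have := cross_eq0_represents (pf a) (pf b); rewrite fab eqxx cross_comb scaler_eq0.
  by rewrite (negbTE c12) orbF.
have fp2 a : f a != p2 by rewrite -(cross_eq0_represents (pf a) pw2) cross_combr.
have /subset_leq_card : p2 |: f @: F \subset [set p in linear_set W | incident p l].
  apply/subsetP => _ /setU1P[->|/imsetP[a aF ->]]; rewrite !inE.
    by rewrite p2l andbT; apply/existsP; exists w2; rewrite w2W.
  rewrite (incident_represents _ (pf a)) dotDl dotZl.
  rewrite (incident_represents _ pw1) in p1l; rewrite (incident_represents _ pw2) in p2l.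
  rewrite (eqP p1l) (eqP p2l) mulr0 addr0 eqxx andbT.
  by apply/existsP; exists (w1 + a *: w2); rewrite pf add_closed ?scale_closed.
have p2f : p2 \notin f @: F.
  by apply/imsetP => -[a _ /eqP]; rewrite eq_sym (negbTE (fp2 a)).
by rewrite cardsU1 (card_in_imset finj) p2f add1n.
Qed.

End LinearSet.

Lemma card_dot_kernel u : u != 0 -> #|[set v | dot u v == 0]| = (#|K| ^ 2)%N.
Proof.
move=> u0; have [e eu] := exists_dot1 u0; rewrite dotC in eu.
pose N := [set v | dot u v == 0]; pose f (vc : 'rV[K]_3 * K) := vc.1 + vc.2 *: e.
have finj : {in setX N [set: K] &, injective f}.
  move=> [v c] [v' c'] /setXP[/= + _] /setXP[/= + _].
  rewrite !inE /f /= => /eqP Nv /eqP Nv' E.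
  have cc' : c = c'.
    by have := congr1 (dot u) E; rewrite !dotDr !dotZr eu Nv Nv' !add0r !mulr1.
  by move: E; rewrite cc' => /addIr->.
have fT : f @: setX N [set: K] = [set: 'rV[K]_3].
  apply/setP => v; rewrite inE; apply/imsetP; exists (v - dot u v *: e, dot u v).
    by rewrite !inE andbT dotDr -scaleNr dotZr eu mulNr mulr1 subrr.
  by rewrite /f /= subrK.
have := card_in_imset finj; rewrite fT cardsX !cardsT card_mx mul1n expnSr => /eqP.
by rewrite eqn_pmul2r ?(ltnW (finNzRing_gt1 K)) // eq_sym => /eqP.
Qed.

(* Lines are coded like points, so the pencil of lines through P is itself a linear set. *)
Lemma lines_through_linear_set P :
  [set l : line K | incident P l] = linear_set [set v | dot (val P) v == 0].
Proof.
apply/setP => l; rewrite !inE incidentE; apply/idP/existsP => [Pl|[w /andP[]]].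
  by exists (val l); rewrite inE Pl represents_val.
by rewrite inE => /eqP Pw /representsP[c _ ->]; rewrite dotZr Pw mulr0.
Qed.

Lemma card_lines_through_ge P : (#|K|.+1 <= #|[set l : line K | incident P l]|)%N.
Proof.
have := card_linear_set_ge [set v | dot (val P) v == 0].
rewrite -lines_through_linear_set; set N := [set v | _].
have -> : #|N :\ 0| = (#|K| ^ 2 - 1)%N.
  have N0 : 0 \in N by rewrite inE dotE !mxE !mulr0 !addr0.
  by rewrite -(card_dot_kernel (normalized_neq0 (valP P))) (cardsD1 0 N) N0 add1n subn1.
have := finNzRing_gt1 K; move: #|K| #|[set l | _]| => n t; nia.
Qed.

Lemma meet_cardD1 P S l : P \in S -> incident P l ->
  meet_card S l = (meet_card (S :\ P) l).+1.
Proof.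
move=> PS Pl; rewrite /meet_card (cardsD1 P) inE PS Pl add1n; congr _.+1.
by apply: eq_card => Q; rewrite !inE andbA.
Qed.

Lemma meet_cardU S S' l : [disjoint S & S'] ->
  meet_card (S :|: S') l = (meet_card S l + meet_card S' l)%N.
Proof.
move=> SS'; have sub (A : {set point K}) : [set p in A | incident p l] \subset A.
  by apply/subsetP => p; rewrite inE => /andP[].
rewrite /meet_card -cardsUI (disjoint_setI0 (disjointWl (sub S) (disjointWr (sub S') SS'))).
by rewrite cards0 addn0; congr #|pred_of_set _|; apply/setP => p; rewrite !inE andb_orl.
Qed.

Lemma tangent_minimal_tfold_blocking t S : tfold_blocking t S ->
  (forall P, P \in S -> exists2 l, incident P l & meet_card S l = t) ->
  minimal_tfold_blocking t S.
Proof.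
move=> blockS tangent; split=> // S' /properP[S'S [P PS PS']] blockS'.
have [l Pl St] := tangent P PS.
have : [set p in S' | incident p l] \proper [set p in S | incident p l].
  apply/properP; split.
    by apply/subsetP => p; rewrite !inE => /andP[/(subsetP S'S)-> ->].
  by exists P; rewrite !inE ?PS ?Pl // (negbTE PS').
by move/proper_card; rewrite -/(meet_card _ _) -/(meet_card _ _) St ltnNge blockS'.
Qed.

Section TangentLine.

Variables (s : nat) (L1 L2 L3 : {set point K}).
Hypothesis s_gt2 : (2 < s)%N.
Hypotheses (sec1 : secants_gt s L1) (sec2 : secants_gt s L2) (sec3 : secants_gt s L3).
Hypotheses (size1 : ((s - 1) * #|L1| <= #|K| * s)%N)
  (size2 : ((s - 1) * #|L2| <= #|K| * s)%N) (size3 : ((s - 1) * #|L3| <= #|K| * s)%N).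
Hypotheses (block2 : blocking_set L2) (block3 : blocking_set L3).

Lemma tangent_line_through P : [disjoint L1 & L2] -> [disjoint L1 & L3] -> P \in L1 ->
  exists2 l, incident P l &
    [&& meet_card L1 l == 1%N, meet_card L2 l == 1%N & meet_card L3 l == 1%N].
Proof.
move=> d12 d13 P1; have P2 : P \notin L2 by rewrite (disjointFr d12 P1).
have P3 : P \notin L3 by rewrite (disjointFr d13 P1).
have [/existsP[l /andP[Pl ml]]|/existsPn none] := boolP [exists l, incident P l &&
    [&& meet_card L1 l == 1%N, meet_card L2 l == 1%N & meet_card L3 l == 1%N]].
  by exists l.
pose T := [set l : line K | incident P l].
have : (\sum_(l in T) (s + 2) <=
         \sum_(l in T) (meet_card (L1 :\ P) l + meet_card L2 l + meet_card L3 l))%N.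
  apply: leq_sum => l; rewrite inE => Pl; have := none l; rewrite Pl (meet_cardD1 P1 Pl) /=.
  have := @sec1 l; have := @sec2 l; have := @sec3 l; have := block2 l; have := block3 l.
  rewrite (meet_cardD1 P1 Pl); lia.
rewrite sum_nat_const !big_split /= !sum_meet_card_lines_through ?inE ?eqxx //.
move=> sum_ge; have := card_lines_through_ge P; rewrite -/T.
move: sum_ge size1 size2 size3 s_gt2; rewrite (cardsD1 P L1) P1 add1n.
move: #|T| #|L1 :\ P| #|L2| #|L3| #|K| => t x1 x2 x3 n; nia.
Qed.

End TangentLine.

End ProjectivePlane.

Lemma card_roots_of_unity_ge (F : finFieldType) d :
  (d %| #|F|.-1)%N -> (d <= #|[set x : F | x ^+ d == 1%R]|)%N.
Proof.
move=> dvd_d; have /cyclicP[a Ga] := field_unit_group_cyclic [set: {unit F}]%G.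
have oa : #[a]%g = #|F|.-1 by rewrite /order -Ga card_finField_unit.
rewrite -oa in dvd_d; have /setP/(_ <[(a ^+ (#[a] %/ d))%g]>%G) := cycle_sub_group dvd_d.
rewrite set11 inE => /andP[_ /eqP oH].
rewrite -[X in (X <= _)%N]oH -(card_imset _ val_inj).
apply/subset_leq_card/subsetP => _ /imsetP[u Hu ->].
by rewrite inE -val_unitX -oH expg_cardG.
Qed.

Lemma card_Fq_ge (K : finFieldType) (q h : nat) : (1 < q)%N -> #|K| = (q ^ h)%N ->
  (q <= #|[set y : K | y ^+ q == y]|)%N.
Proof.
move=> q1 cK; pose U := [set x : K | x ^+ q.-1 == 1].
have /subset_leq_card : 0 |: U \subset [set y : K | y ^+ q == y].
  apply/subsetP => x; rewrite !inE => /orP[/eqP->|/eqP xq1].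
    by rewrite expr0n eqn0Ngt (ltnW q1).
  by rewrite -(prednK (ltnW q1)) exprS xq1 mulr1.
have q1_gt0 : (0 < q.-1)%N by rewrite -ltnS prednK // ltnW.
apply: leq_trans; rewrite cardsU1 inE expr0n eqn0Ngt q1_gt0 eq_sym oner_eq0 add1n.
rewrite -{1}(prednK (ltnW q1)) ltnS card_roots_of_unity_ge // cK predn_exp.
exact: dvdn_mulr.
Qed.

Lemma prime_power_pchar_nat (K : finFieldType) (q h : nat) :
  prime_power q -> #|K| = (q ^ h)%N -> (0 < h)%N -> [pchar K].-nat q.
Proof.
case=> p [k [p_pr [k0 ->]]] cK h0.
have pK : p \in [pchar K] by apply: (card_finPcharP (n := (k * h)%N)); rewrite ?cK ?expnM.
by rewrite pnatX pnatE // pK.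
Qed.

Section StandardSet.

Variables (K : finFieldType) (q h : nat).
Hypothesis q_pchar : [pchar K].-nat q.

Local Notation Fq := [set y : K | y ^+ q == y].

Lemma exprDn_qpow i (x y : K) : (x + y) ^+ (q ^ i) = x ^+ (q ^ i) + y ^+ (q ^ i).
Proof. by apply: exprDn_pchar; rewrite pnatX q_pchar. Qed.

Lemma trace0 : trace q h (0 : K) = 0.
Proof.
have q0 : (0 < q)%N by move: q_pchar; rewrite /pnat => /andP[].
by rewrite /trace big1 // => i _; rewrite expr0n expn_eq0 eqn0Ngt q0.
Qed.

Lemma traceD (x y : K) : trace q h (x + y) = trace q h x + trace q h y.
Proof. by rewrite /trace -big_split; apply: eq_bigr => i _; rewrite exprDn_qpow. Qed.

Lemma traceZ (a x : K) : a \in Fq -> trace q h (a * x) = a * trace q h x.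
Proof.
rewrite inE => /eqP aq; have aqn n : a ^+ (q ^ n) = a.
  by elim: n => [|n IHn]; rewrite ?expr1 // expnSr exprM IHn.
by rewrite /trace mulr_sumr; apply: eq_bigr => i _; rewrite exprMn aqn.
Qed.

Definition std_vectors (A : 'M[K]_3) : {set 'rV[K]_3} :=
  [set row3 x (trace q h x) y *m A | x in [set: K], y in Fq].

Section Closure.

Variable A : 'M[K]_3.

Lemma std_vectorsD u v :
  u \in std_vectors A -> v \in std_vectors A -> u + v \in std_vectors A.
Proof.
case/imset2P => x y _ yF -> /imset2P[x' y' _ y'F ->]; rewrite -mulmxDl.
apply/imset2P; exists (x + x') (y + y'); rewrite ?inE //.
  by move: yF y'F; rewrite !inE -[q]expn1 exprDn_qpow => /eqP-> /eqP->.
by congr (_ *m A); apply: eq_row3; rewrite !mxE /= ?traceD.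
Qed.

Lemma std_vectorsZ a u : a \in Fq -> u \in std_vectors A -> a *: u \in std_vectors A.
Proof.
move=> aF /imset2P[x y _ yF ->]; rewrite scalemxAl.
apply/imset2P; exists (a * x) (a * y); rewrite ?inE //.
  by move: aF yF; rewrite !inE exprMn => /eqP-> /eqP->.
by congr (_ *m A); apply: eq_row3; rewrite !mxE /= ?traceZ.
Qed.

Lemma card_std_vectors : (#|std_vectors A| <= #|K| * #|Fq|)%N.
Proof.
rewrite /std_vectors curry_imset2X; apply: leq_trans (leq_imset_card _ _) _.
by rewrite cardsX cardsT.
Qed.

End Closure.

Lemma proj_equiv_std_linear (L : {set point K}) :
  proj_equiv_std q h L -> exists A, L = linear_set (std_vectors A).
Proof.
case=> A [_ LA]; exists A; apply/setP => p; rewrite inE; apply/idP/existsP.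
  case/LA => s; rewrite inE => /existsP[x /existsP[y /and3P[yF _ /representsP[c c0 sxy]]]].
  rewrite sxy -scalemxAl representsZ // => pxy.
  exists (row3 x (trace q h x) y *m A); rewrite pxy andbT.
  by apply/imset2P; exists x y; rewrite ?inE.
case=> _ /andP[/imset2P[x y _ yF ->] pxy]; apply/LA.
have xy0 : row3 x (trace q h x) y != 0.
  by apply: contraNneq (represents_neq0 pxy) => ->; rewrite mul0mx.
have [s sxy] := represents_exists xy0; exists s => //.
  rewrite inE in yF; rewrite inE; apply/existsP; exists x; apply/existsP; exists y.
  rewrite yF sxy andbT /=; apply: contraNneq xy0 => -[-> ->].
  by apply/eqP/eq_row3; rewrite !mxE /= ?trace0.
by case/representsP: sxy => c c0 ->; rewrite -scalemxAl representsZ.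
Qed.

Lemma proj_equiv_std_bounds (L : {set point K}) : proj_equiv_std q h L ->
  secants_gt #|Fq| L /\ ((#|Fq| - 1) * #|L| <= #|K| * #|Fq|)%N.
Proof.
case/proj_equiv_std_linear => A ->; split.
  exact: secants_gt_linear_set (@std_vectorsZ A) (@std_vectorsD A).
apply: leq_trans (card_linear_set_le (@std_vectorsZ A)) _.
by apply: leq_trans (card_std_vectors A); apply/subset_leq_card/subsetDl.
Qed.

End StandardSet.

Theorem proposition2p12 (K : finFieldType) (q h : nat)
    (L1 L2 L3 : {set point K}) :
  prime_power q -> (2 < q)%N -> (2 <= h)%N -> #|K| = (q ^ h)%N ->
  [disjoint L1 & L2] -> [disjoint L1 & L3] -> [disjoint L2 & L3] ->
  blocking_set L1 -> blocking_set L2 -> blocking_set L3 ->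
  proj_equiv_std q h L1 -> proj_equiv_std q h L2 -> proj_equiv_std q h L3 ->
  minimal_tfold_blocking 3 (L1 :|: L2 :|: L3).
Proof.
move=> pq q2 h2 cK d12 d13 d23 b1 b2 b3 e1 e2 e3.
have q_pchar := prime_power_pchar_nat pq cK (ltnW h2).
have s2 := leq_trans q2 (card_Fq_ge (ltnW q2) cK).
have [sec1 size1] := proj_equiv_std_bounds q_pchar e1.
have [sec2 size2] := proj_equiv_std_bounds q_pchar e2.
have [sec3 size3] := proj_equiv_std_bounds q_pchar e3.
have meetE l : meet_card (L1 :|: L2 :|: L3) l =
    (meet_card L1 l + meet_card L2 l + meet_card L3 l)%N.
  by rewrite !meet_cardU // disjoints_subset subUset -!disjoints_subset d13 d23.
have [d21 d31 d32] : [/\ [disjoint L2 & L1], [disjoint L3 & L1] & [disjoint L3 & L2]].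
  by rewrite ![[disjoint L3 & _]]disjoint_sym disjoint_sym.
apply: tangent_minimal_tfold_blocking => [l|P].
  by rewrite meetE; have := b1 l; have := b2 l; have := b3 l; lia.
rewrite !inE => /orP[/orP[PL|PL]|PL].
- have [l Pl /and3P[/eqP m1 /eqP m2 /eqP m3]] :=
    tangent_line_through s2 sec1 sec2 sec3 size1 size2 size3 b2 b3 d12 d13 PL.
  by exists l; rewrite // meetE m1 m2 m3.
- have [l Pl /and3P[/eqP m2 /eqP m1 /eqP m3]] :=
    tangent_line_through s2 sec2 sec1 sec3 size2 size1 size3 b1 b3 d21 d23 PL.
  by exists l; rewrite // meetE m1 m2 m3.
- have [l Pl /and3P[/eqP m3 /eqP m1 /eqP m2]] :=
    tangent_line_through s2 sec3 sec1 sec2 size3 size1 size2 b1 b2 d31 d32 PL.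
  by exists l; rewrite // meetE m1 m2 m3.
Qed.
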